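(* Let $m,n$ be positive integers and let $R$ be an $m\times n$ rectangular permutation matrix. Then $\frac{1}{2}(R+R^\pi)$ is an extreme point of $\Gamma^\pi_{m,n}$ if and only if one of the following holds: (i) $m$ is even and $R$ is a centrosymmetric rectangular permutation matrix; (ii) $m$ is odd and $\tilde R$ is an $(m-1)\times n$ centrosymmetric rectangular permutation matrix, where $\tilde R$ is the matrix obtained from $R$ by deleting its center row (the $\frac{m+1}{2}$-th row).
   Context: A real $m\times n$ matrix is stochastic if its entries are nonnegative and each row sums to $1$. For $A=(a_{i,j})\in M_{p,n}$, $A^\pi$ is the $p\times n$ matrix with $(A^\pi)_{i,j}=a_{p+1-i,n+1-j}$; $A$ is centrosymmetric if $A=A^\pi$. $\Gamma^\pi_{m,n}$ is the convex set of $m\times n$ centrosymmetric stochastic matrices. A rectangular permutation matrix is a $(0,1)$-matrix with exactly one $1$ in each row. *)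

From HB Require Import structures.
From mathcomp Require Import all_boot all_order all_algebra.
From mathcomp Require Import zify.
Set Implicit Arguments. Unset Strict Implicit. Unset Printing Implicit Defensive.
Import Order.TTheory GRing.Theory Num.Theory.
Local Open Scope ring_scope.

Section Defs.
Variable R : realFieldType.

Definition mx_pi (p n : nat) (A : 'M[R]_(p, n)) : 'M[R]_(p, n) :=
  \matrix_(i, j) A (rev_ord i) (rev_ord j).

Definition centrosymmetric (p n : nat) (A : 'M[R]_(p, n)) : Prop :=
  A = mx_pi A.

Definition stochastic (p n : nat) (A : 'M[R]_(p, n)) : Prop :=
  (forall i j, 0 <= A i j) /\ (forall i, \sum_j A i j = 1).

Definition Gamma_pi (m n : nat) : 'M[R]_(m, n) -> Prop :=
  fun A => stochastic A /\ centrosymmetric A.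

Definition extreme_point (m n : nat) (S : 'M[R]_(m, n) -> Prop)
  (A : 'M[R]_(m, n)) : Prop :=
  S A /\
  forall (B C : 'M[R]_(m, n)) (t : R), S B -> S C -> 0 < t -> t < 1 ->
    A = t *: B + (1 - t) *: C -> B = A /\ C = A.

Definition rect_perm_mx (p n : nat) (A : 'M[R]_(p, n)) : Prop :=
  (forall i j, A i j = 0 \/ A i j = 1) /\
  (forall i, #|[set j | A i j == 1]| = 1%N).

End Defs.

(* index map 'I_(m-1) -> 'I_m skipping the center row m./2 (0-based),
   i.e. the ((m+1)/2)-th row (1-based) when m is odd *)
Lemma skip_center_proof (m : nat) (i : 'I_m.-1) : (bump m./2 i < m)%N.
Proof. case: i => i /= Hi; rewrite /bump; case: (m./2 <= i)%N; lia. Qed.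

Definition skip_center (m : nat) (i : 'I_m.-1) : 'I_m :=
  Ordinal (skip_center_proof i).

Definition del_center_row (R : realFieldType) (m n : nat) (A : 'M[R]_(m, n))
  : 'M[R]_(m.-1, n) :=
  \matrix_(i, j) A (skip_center i) j.

(* The extremality of A = (P + P^pi)/2 is decided row by row.  If some
   non-central row i of P differs from the reversed row rev(i) of P^pi, then
   replacing rows i, rev(i) of A by (P_i, P^pi_rev(i)), resp. (P^pi_i, P_rev(i)),
   writes A as the midpoint of two distinct points of Gamma^pi.  Conversely, if
   P agrees with P^pi off the centre, every entry of A is 0, 1, or 1/2 in a
   central row at a column j <> rev(j); any B of Gamma^pi occurring in a proper
   convex decomposition of A is then dominated entrywise by A (by positivity,
   row-stochasticity and centrosymmetry), and equal row sums force B = A.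
   Finally, "P agrees with P^pi off the centre" means P centrosymmetric for even
   m, and P with its centre row deleted centrosymmetric for odd m. *)
From HB Require Import structures.
From mathcomp Require Import all_boot all_order all_algebra.
From mathcomp Require Import zify lra.
Set Implicit Arguments. Unset Strict Implicit. Unset Printing Implicit Defensive.
Import Order.TTheory GRing.Theory Num.Theory.
Local Open Scope ring_scope.

Section Stochastic.
Variables (R : realFieldType) (p n : nat).
Implicit Types A B : 'M[R]_(p, n).

Lemma rect_perm_mx_stochastic A : rect_perm_mx A -> stochastic A.
Proof.
case=> A01 A1; split=> [i j | i]; first by case: (A01 i j) => ->.
have -> : \sum_j A i j = \sum_(j | A i j == 1) 1.
  rewrite [RHS]big_mkcond /=; apply: eq_bigr => j _.
  by case: (A01 i j) => ->; rewrite ?eqxx // eq_sym oner_eq0.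
by rewrite sumr_const -cardsE A1.
Qed.

Lemma stochastic_le1 A i j : stochastic A -> A i j <= 1.
Proof. by case=> A0 A1; rewrite -(A1 i) (bigD1 j) //= lerDl sumr_ge0. Qed.

Lemma stochastic_le_eq A B :
  stochastic A -> stochastic B -> (forall i j, B i j <= A i j) -> B = A.
Proof.
move=> [_ A1] [_ B1] BleA; apply/matrixP => i j; apply/eqP.
rewrite eq_sym -subr_eq0; apply/eqP.
have sum0 : \sum_j (A i j - B i j) = 0 by rewrite sumrB A1 B1 subrr.
by apply: (psumr_eq0P _ sum0) => // k _; rewrite subr_ge0.
Qed.

Lemma stochastic_mx_pi A : stochastic A -> stochastic (mx_pi A).
Proof.
case=> A0 A1; split=> [i j | i]; first by rewrite mxE.
under eq_bigr do rewrite mxE.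
by rewrite (reindex_inj rev_ord_inj) /=; under eq_bigr do rewrite rev_ordK; exact: A1.
Qed.

Definition symmetrize A : 'M[R]_(p, n) := 2^-1 *: (A + mx_pi A).

Lemma symmetrizeE A i j :
  symmetrize A i j = 2^-1 * (A i j + A (rev_ord i) (rev_ord j)).
Proof. by rewrite !mxE. Qed.

Lemma Gamma_pi_symmetrize A : stochastic A -> Gamma_pi (symmetrize A).
Proof.
move=> SA; have [A0 A1] := SA; have [_ A'1] := stochastic_mx_pi SA.
split; first split=> [i j | i].
- by rewrite symmetrizeE mulr_ge0 ?addr_ge0 ?invr_ge0 ?ler0n.
- have -> : \sum_j symmetrize A i j = 2^-1 * (\sum_j A i j + \sum_j mx_pi A i j).
    by rewrite -big_split mulr_sumr; apply: eq_bigr => j _; rewrite !mxE.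
  by rewrite A1 A'1; lra.
- by apply/matrixP => i j; rewrite [RHS]mxE !symmetrizeE !rev_ordK addrC.
Qed.

Lemma Gamma_pi_center_entry_le_half B i j :
  Gamma_pi B -> i = rev_ord i -> j != rev_ord j -> B i j <= 2^-1.
Proof.
move=> [[B0 B1] Bpi] ci cj.
have Bji : B i (rev_ord j) = B i j by rewrite {2}Bpi mxE -ci.
have : B i j + B i (rev_ord j) <= 1.
  by rewrite -(B1 i) (bigD1 j) //= (bigD1 (rev_ord j)) 1?eq_sym //= addrA lerDl sumr_ge0.
rewrite Bji; lra.
Qed.

Definition centrosymmetric_off_center A : Prop :=
  forall i j, i != rev_ord i -> A i j = A (rev_ord i) (rev_ord j).

Definition splice_rows i (X M : 'M[R]_(p, n)) : 'M[R]_(p, n) :=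
  \matrix_(k, l) if k == i then X k l
                 else if k == rev_ord i then mx_pi X k l else M k l.

Lemma Gamma_pi_splice_rows i X M :
  i != rev_ord i -> stochastic X -> Gamma_pi M -> Gamma_pi (splice_rows i X M).
Proof.
move=> ci SX [[M0 M1] Mpi]; have [X0 X1] := SX; have [X'0 X'1] := stochastic_mx_pi SX.
split; first split=> [k l | k].
- by rewrite mxE; case: ifP => _; last case: ifP.
- under eq_bigr do rewrite mxE.
  by case: (k == i); last case: (k == rev_ord i).
apply/matrixP => k l; rewrite !mxE.
have rev_eq k' : (rev_ord k' == i) = (k' == rev_ord i) by rewrite (can2_eq rev_ordK rev_ordK).
case: (eqVneq k i) => [-> | ki]; first by rewrite (rev_eq i) (negbTE ci) eqxx !rev_ordK.
case: (eqVneq k (rev_ord i)) => [-> | kri]; first by rewrite rev_ordK eqxx.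
by rewrite (rev_eq k) (negbTE kri) (inj_eq rev_ord_inj) (negbTE ki) {1}Mpi mxE.
Qed.

End Stochastic.

Section Extremality.
Variables (R : realFieldType) (m n : nat) (P : 'M[R]_(m, n)).
Hypothesis P_rect : rect_perm_mx P.

Let P_stoch : stochastic P := rect_perm_mx_stochastic P_rect.

Lemma symmetrize_entry_cases i j :
  centrosymmetric_off_center P ->
  let a := symmetrize P i j in
  a = 0 \/ a = 1 \/ [/\ a = 2^-1, i = rev_ord i & j != rev_ord j].
Proof.
move=> PC /=; rewrite symmetrizeE; have P01 := P_rect.1.
have [ci | ci] := eqVneq i (rev_ord i); last first.
  by rewrite -(PC i j ci); case: (P01 i j) => ->; [left | right; left]; lra.
rewrite -ci; have [cj | cj] := eqVneq j (rev_ord j).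
  by rewrite -cj; case: (P01 i j) => ->; [left | right; left]; lra.
case: (P01 i j) => ->; case: (P01 i (rev_ord j)) => ->.
- by left; lra.
- by right; right; split=> //; lra.
- by right; right; split=> //; lra.
- by right; left; lra.
Qed.

Lemma symmetrize_dominates B C t :
  centrosymmetric_off_center P -> Gamma_pi B -> Gamma_pi C -> 0 < t -> t < 1 ->
  symmetrize P = t *: B + (1 - t) *: C -> forall i j, B i j <= symmetrize P i j.
Proof.
move=> PC GB [[C0 _] _] t0 t1 E i j.
have Eij : symmetrize P i j = t * B i j + (1 - t) * C i j by rewrite E !mxE.
case: (symmetrize_entry_cases i j PC) => /= [a0 | [a1 | [ah ci cj]]].
- by have := GB.1.1 i j; have := C0 i j; rewrite a0 in Eij *; nra.
- by rewrite a1; apply: stochastic_le1 GB.1.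
- by rewrite ah; apply: Gamma_pi_center_entry_le_half.
Qed.

Lemma off_center_extreme :
  centrosymmetric_off_center P -> extreme_point (@Gamma_pi R m n) (symmetrize P).
Proof.
move=> PC; have GA := Gamma_pi_symmetrize P_stoch; split=> // B C t GB GC t0 t1 E.
have E' : symmetrize P = (1 - t) *: C + (1 - (1 - t)) *: B.
  by rewrite E addrC subKr.
split; apply: stochastic_le_eq GA.1 _ _.
- exact: GB.1.
- exact: symmetrize_dominates GB GC t0 t1 E.
- exact: GC.1.
- by apply: symmetrize_dominates GC GB _ _ E' => //; lra.
Qed.

Lemma extreme_off_center :
  extreme_point (@Gamma_pi R m n) (symmetrize P) -> centrosymmetric_off_center P.
Proof.
move=> [GA ext] i j ci.
pose B := splice_rows i P (symmetrize P).
pose C := splice_rows i (mx_pi P) (symmetrize P).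
have GB : Gamma_pi B := Gamma_pi_splice_rows ci P_stoch GA.
have GC : Gamma_pi C := Gamma_pi_splice_rows ci (stochastic_mx_pi P_stoch) GA.
have E : symmetrize P = 2^-1 *: B + (1 - 2^-1) *: C.
  apply/matrixP => k l; rewrite !mxE !rev_ordK.
  by case: ifP => _; last case: ifP => _; lra.
have [/matrixP/(_ i j) Bij _] := ext B C 2^-1 GB GC ltac:(lra) ltac:(lra) E.
by move: Bij; rewrite !mxE eqxx; lra.
Qed.

Lemma extreme_symmetrizeP :
  extreme_point (@Gamma_pi R m n) (symmetrize P) <-> centrosymmetric_off_center P.
Proof. by split; [apply: extreme_off_center | apply: off_center_extreme]. Qed.

End Extremality.

Lemma rev_ord_fixed m (i : 'I_m) : (i == rev_ord i) = (i.*2.+1 == m)%N.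
Proof. by rewrite -val_eqE /=; move: (ltn_ord i) => ?; apply/eqP/eqP; lia. Qed.

Lemma skip_center_rev m (i : 'I_m.-1) :
  odd m -> skip_center (rev_ord i) = rev_ord (skip_center i).
Proof.
move=> mo; apply: val_inj => /=; rewrite /bump; have := ltn_ord i.
by case: leqP => ?; case: leqP => ? /=; lia.
Qed.

Lemma skip_center_off_center m (i : 'I_m.-1) :
  odd m -> skip_center i != rev_ord (skip_center i).
Proof.
by move=> mo; rewrite rev_ord_fixed /= /bump; have := ltn_ord i; case: leqP => ? /=; lia.
Qed.

Lemma skip_center_onto m (i : 'I_m) :
  (i != m./2 :> nat) -> exists k : 'I_m.-1, skip_center k = i.
Proof.
move=> ic; have lt_k : (unbump m./2 i < m.-1)%N.
  by rewrite /unbump; have := ltn_ord i; case: ltnP => ? /=; lia.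
exists (Ordinal lt_k); apply: val_inj; rewrite /= /bump /unbump.
by case: ltnP => ?; case: leqP => ? /=; lia.
Qed.

Section Center.
Variables (R : realFieldType) (m n : nat) (A : 'M[R]_(m, n)).

Lemma off_center_even :
  ~~ odd m -> centrosymmetric_off_center A <-> centrosymmetric A.
Proof.
move=> me; split=> [AC | Api i j _]; last by rewrite {1}Api mxE.
apply/matrixP => i j; rewrite mxE; apply: AC.
by rewrite rev_ord_fixed; apply/eqP => mE; rewrite -mE /= odd_double in me.
Qed.

Lemma off_center_odd :
  odd m -> centrosymmetric_off_center A <-> centrosymmetric (del_center_row A).
Proof.
move=> mo; split=> [AC | Api i j ci].
  by apply/matrixP => k l; rewrite !mxE skip_center_rev // AC // skip_center_off_center.
have [|k <-] := skip_center_onto (i := i).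
  by apply: contraNneq ci => ic; rewrite rev_ord_fixed ic; apply/eqP; lia.
by move/matrixP: Api => /(_ k j); rewrite !mxE skip_center_rev.
Qed.

Lemma rect_perm_mx_del_center_row : rect_perm_mx A -> rect_perm_mx (del_center_row A).
Proof.
case=> A01 A1; split=> [i j | i]; first by rewrite mxE.
by rewrite -(A1 (skip_center i)); apply: eq_card => j; rewrite !inE mxE.
Qed.

End Center.

Theorem mainTheorem4 (R : realFieldType) (m n : nat) (hm : (0 < m)%N) (hn : (0 < n)%N)
  (P : 'M[R]_(m, n)) (hP : rect_perm_mx P) :
  extreme_point (@Gamma_pi R m n) (2^-1 *: (P + mx_pi P)) <->
  ((~~ odd m /\ centrosymmetric P /\ rect_perm_mx P) \/
   (odd m /\ centrosymmetric (del_center_row P) /\ rect_perm_mx (del_center_row P))).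
Proof.
apply: iff_trans (extreme_symmetrizeP hP) _.
have Pdel := rect_perm_mx_del_center_row hP.
case: (boolP (odd m)) => [mo | me].
- rewrite (off_center_odd P mo); split=> [? | [[] // | [_ []] //]].
  by right.
- rewrite (off_center_even P me); split=> [? | [[_ []] // | []] //].
  by left.
Qed.
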